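(* Let $S$ be a finite semigroup whose minimal ideal $J$ consists of right zeroes and such that $S$ acts faithfully on the right of $J$. Then $\llbracket S\rrbracket^{\mathsf{bar}}=\llbracket S\rrbracket$.
   Context: A pseudovariety is a class of finite semigroups closed under finite direct products, subsemigroups and homomorphic images; $\llbracket\mathscr{K}\rrbracket$ is the pseudovariety generated by $\mathscr{K}$. An element $z$ is a right zero if $sz=z$ for all $s$. For a semigroup $S$, $S^\bullet=S$ if $S$ is a monoid and $S^\bullet=S^I$ (external identity adjoined) otherwise; $S^{\mathsf{bar}}$ is the semigroup of transformations of $S^\bullet$ (acting on the right) consisting of right multiplications by elements of $S$ together with all constant maps on $S^\bullet$. For a pseudovariety $\mathbf{V}$, $\mathbf{V}^{\mathsf{bar}}=\llbracket T^{\mathsf{bar}}\mid T\in\mathbf{V}\rrbracket$. *)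

From mathcomp Require Import all_boot.
Set Implicit Arguments. Unset Strict Implicit. Unset Printing Implicit Defensive.

Record finSemigroup := FinSemigroup {
  sg_car :> finType;
  sg_op : sg_car -> sg_car -> sg_car;
  sg_opA : associative sg_op;
  sg_nonempty : 0 < #|sg_car| }.

Arguments sg_op {_} _ _.
Notation "x \* y" := (sg_op x y) (at level 40, left associativity).

Definition sg_hom (S T : finSemigroup) (f : S -> T) :=
  forall x y : S, f (x \* y) = f x \* f y.

Lemma unit_nonempty : 0 < #|{: unit}|. Proof. by rewrite card_unit. Qed.
Definition trivial_sg : finSemigroup :=
  @FinSemigroup unit (fun _ _ => tt) (fun _ _ _ => erefl) unit_nonempty.

Definition prod_op (S T : finSemigroup) (x y : S * T) : S * T :=
  (x.1 \* y.1, x.2 \* y.2).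

Lemma prod_opA (S T : finSemigroup) : associative (@prod_op S T).
Proof. by move=> [a b] [c d] [e f]; rewrite /prod_op /= !sg_opA. Qed.

Lemma prod_nonempty (S T : finSemigroup) : 0 < #|{: S * T}|.
Proof. by rewrite card_prod muln_gt0 !sg_nonempty. Qed.

Definition prod_sg (S T : finSemigroup) : finSemigroup :=
  FinSemigroup (@prod_opA S T) (prod_nonempty S T).

(* Pseudovarieties: classes closed under finite direct products,
   subsemigroups (injective homomorphisms) and homomorphic images. *)
Definition pseudovariety (V : finSemigroup -> Prop) : Prop :=
  [/\ V trivial_sg,
      (forall S T, V S -> V T -> V (prod_sg S T)),
      (forall (S T : finSemigroup) (f : T -> S), sg_hom f -> injective f -> V S -> V T)
    & (forall (S T : finSemigroup) (f : S -> T), sg_hom f ->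
         (forall y, exists x, f x = y) -> V S -> V T)].

Definition generated (K : finSemigroup -> Prop) (T : finSemigroup) : Prop :=
  forall V, pseudovariety V -> (forall S, K S -> V S) -> V T.

Definition is_monoidb (S : finSemigroup) : bool :=
  [exists e : S, [forall s : S, (e \* s == s) && (s \* e == s)]].

Definition adj_op (S : finSemigroup) (x y : option S) : option S :=
  match x, y with
  | None, _ => y
  | _, None => x
  | Some a, Some b => Some (a \* b)
  end.

Lemma adj_opA (S : finSemigroup) : associative (@adj_op S).
Proof. by move=> [a|] [b|] [c|] //=; rewrite sg_opA. Qed.

Lemma adj_nonempty (S : finSemigroup) : 0 < #|{: option S}|.
Proof. by rewrite card_option. Qed.

Definition adj_sg (S : finSemigroup) : finSemigroup :=
  FinSemigroup (@adj_opA S) (adj_nonempty S).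

Definition dot (S : finSemigroup) : finSemigroup :=
  if is_monoidb S then S else adj_sg S.

Definition dotin (S : finSemigroup) : S -> dot S :=
  match is_monoidb S as b return S -> sg_car (if b then S else adj_sg S) with
  | true => id
  | false => Some
  end.

Lemma dotinM (S : finSemigroup) (s t : S) : dotin (s \* t) = dotin s \* dotin t.
Proof. by rewrite /dot /dotin; case: (is_monoidb S). Qed.

(* S^bar: right multiplications by elements of S and constant maps on S^bullet,
   as transformations acting on the right (x (f g) = (x f) g). *)
Definition bar_gen (S : finSemigroup) (u : S + dot S) : {ffun dot S -> dot S} :=
  match u with
  | inl s => [ffun x => x \* dotin s]
  | inr a => [ffun => a]
  end.

Definition bar_pred (S : finSemigroup) : pred {ffun dot S -> dot S} :=
  fun f => [exists u, f == bar_gen u].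

Definition bar_car (S : finSemigroup) : finType := {f : {ffun dot S -> dot S} | bar_pred f}.

Definition fcompr (S : finSemigroup) (f g : {ffun dot S -> dot S}) : {ffun dot S -> dot S} :=
  [ffun x => g (f x)].

Definition sum_op (S : finSemigroup) (u v : S + dot S) : S + dot S :=
  match u, v with
  | inl s, inl t => inl (s \* t)
  | inr a, inl t => inr (a \* dotin t)
  | _, inr b => inr b
  end.

Lemma bar_genM (S : finSemigroup) (u v : S + dot S) :
  fcompr (bar_gen u) (bar_gen v) = bar_gen (sum_op u v).
Proof.
apply/ffunP => x; case: u => [s|a]; case: v => [t|b]; rewrite /fcompr /= !ffunE //=.
by rewrite ?ffunE dotinM sg_opA.
Qed.

Lemma bar_closed (S : finSemigroup) (f g : bar_car S) : bar_pred (fcompr (val f) (val g)).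
Proof.
case: f => f /= /existsP [u /eqP Hf]; case: g => g /= /existsP [v /eqP Hg].
by apply/existsP; exists (sum_op u v); rewrite Hf Hg bar_genM.
Qed.

Definition bar_op (S : finSemigroup) (f g : bar_car S) : bar_car S :=
  exist _ (fcompr (val f) (val g)) (bar_closed f g).

Lemma bar_opA (S : finSemigroup) : associative (@bar_op S).
Proof.
move=> f g h; apply: val_inj => /=; apply/ffunP => x; by rewrite /fcompr !ffunE.
Qed.

Lemma bar_nonempty (S : finSemigroup) : 0 < #|bar_car S|.
Proof.
have /card_gt0P [s _] := sg_nonempty S.
have Hs : bar_pred (bar_gen (inl s)) by apply/existsP; exists (inl s).
by apply/card_gt0P; exists (exist (fun f => is_true (bar_pred f)) _ Hs).
Qed.

Definition bar (S : finSemigroup) : finSemigroup :=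
  FinSemigroup (@bar_opA S) (bar_nonempty S).

Definition barV (V : finSemigroup -> Prop) : finSemigroup -> Prop :=
  generated (fun U => exists T, V T /\ U = bar T).

Definition is_ideal (S : finSemigroup) (I : {set S}) : Prop :=
  I != set0 /\ forall s j, j \in I -> (s \* j \in I) /\ (j \* s \in I).

Definition minimal_ideal (S : finSemigroup) (J : {set S}) : Prop :=
  is_ideal J /\ forall I, is_ideal I -> I \subset J -> I = J.

Definition sg_right_zero (S : finSemigroup) (z : S) : Prop := forall s : S, s \* z = z.

Definition faithful_right_on (S : finSemigroup) (J : {set S}) : Prop :=
  forall s t : S, (forall j, j \in J -> j \* s = j \* t) -> s = t.

From mathcomp Require Import all_boot.
Set Implicit Arguments. Unset Strict Implicit. Unset Printing Implicit Defensive.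

(* S embeds in S^bar as the right multiplications, which are pairwise distinct
   because S^• has an identity; hence [[S]] is contained in [[S]]^bar.
   Conversely, the divisors of those P in [[S]] having a nonempty right ideal J
   of right zeroes on which P acts faithfully form a pseudovariety containing S,
   so every T in [[S]] is a quotient of a subsemigroup U of such a P. Then U^bar
   embeds in P^J: right multiplication by s goes to the constant tuple (s)_j and
   the constant map a to (j a)_j; faithfulness on J separates these tuples, and
   also shows that U is a monoid as soon as some s acts trivially on J. As T^bar
   is a quotient of U^bar, it divides P^J, which lies in [[S]]. *)

Definition sg_identity (S : finSemigroup) (e : S) :=
  left_id e (@sg_op S) /\ right_id e (@sg_op S).

Lemma sg_identity_uniq (S : finSemigroup) (e f : S) :
  sg_identity e -> sg_identity f -> e = f.
Proof. by move=> [_ eK] [fK _]; rewrite -[LHS]fK eK. Qed.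

Lemma is_monoidbP (S : finSemigroup) :
  reflect (exists e : S, sg_identity e) (is_monoidb S).
Proof.
apply: (iffP existsP) => [[e /forallP eP] | [e [eK Ke]]].
  by exists e; split => x; have /andP[/eqP ? /eqP ?] := eP x.
by exists e; apply/forallP => x; rewrite eK Ke !eqxx.
Qed.

Definition dotout (S : finSemigroup) : dot S -> option S :=
  match is_monoidb S as b return sg_car (if b then S else adj_sg S) -> option S with
  | true => Some
  | false => id
  end.

Lemma dotinK (S : finSemigroup) : pcancel (@dotin S) (@dotout S).
Proof. by rewrite /dotin /dotout /dot; case: (is_monoidb S). Qed.

Lemma dotin_inj (S : finSemigroup) : injective (@dotin S).
Proof. exact: pcan_inj (@dotinK S). Qed.

Lemma dotoutK (S : finSemigroup) : ocancel (@dotout S) (@dotin S).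
Proof.
by move=> a; move: a; rewrite /dotin /dotout /dot; case: (is_monoidb S) => // -[].
Qed.

Lemma dotout_None (S : finSemigroup) (a : dot S) :
  dotout a = None -> ~~ is_monoidb S /\ sg_identity a.
Proof.
move: a; rewrite /dotout /sg_identity /dot.
by case: (is_monoidb S) => // -[] // _; split; last split => -[].
Qed.

Variant dot_spec (S : finSemigroup) (a : dot S) : option S -> Prop :=
  | DotIn u of a = dotin u : dot_spec a (Some u)
  | DotOne of ~~ is_monoidb S & sg_identity a : dot_spec a None.

Lemma dotP (S : finSemigroup) (a : dot S) : dot_spec a (dotout a).
Proof.
case E: (dotout a) => [u|]; first by apply: DotIn; rewrite -(dotoutK a) E.
by have [? ?] := dotout_None E; apply: DotOne.
Qed.

Lemma dot_identity (S : finSemigroup) : exists e : dot S, sg_identity e.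
Proof.
rewrite /dot; case E: (is_monoidb S); first exact/is_monoidbP.
by exists None; split=> -[].
Qed.

Lemma generated_pseudovariety (K : finSemigroup -> Prop) :
  pseudovariety (generated K).
Proof.
split=> [V [] // | S T KS KT V pvV VK | S T f fM f_inj KS V pvV VK |
         S T f fM f_onto KS V pvV VK]; case: (pvV) => _ Vprod Vsub Vquo.
- exact: Vprod (KS V pvV VK) (KT V pvV VK).
- exact: Vsub fM f_inj (KS V pvV VK).
- exact: Vquo fM f_onto (KS V pvV VK).
Qed.

Lemma generated_sub (K : finSemigroup -> Prop) (S : finSemigroup) :
  K S -> generated K S.
Proof. by move=> KS V _; apply. Qed.

Section Subsemigroup.
Variables (A : finSemigroup) (P : pred A).
Hypotheses (PM : forall x y, P x -> P y -> P (x \* y)) (P_nonempty : exists x, P x).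

Definition sub_op (x y : {x | P x}) : {x | P x} :=
  exist _ (val x \* val y) (PM (valP x) (valP y)).

Lemma sub_opA : associative sub_op.
Proof. by move=> x y z; apply: val_inj; rewrite /= sg_opA. Qed.

Lemma sub_nonempty : 0 < #|{: {x | P x}}|.
Proof. by case: P_nonempty => x Px; apply/card_gt0P; exists (exist _ x Px). Qed.

Definition sub_sg := FinSemigroup sub_opA sub_nonempty.

Lemma val_sg_hom : sg_hom (fun x : sub_sg => val x).
Proof. by []. Qed.

End Subsemigroup.

Definition surjective (A B : Type) (f : A -> B) := forall y, exists x, f x = y.

Definition divides (T P : finSemigroup) :=
  exists (U : finSemigroup) (i : U -> P) (p : U -> T),
    [/\ sg_hom i, injective i, sg_hom p & surjective p].

Lemma pseudovariety_divides (V : finSemigroup -> Prop) (T P : finSemigroup) :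
  pseudovariety V -> V P -> divides T P -> V T.
Proof.
case=> _ _ Vsub Vquo VP [U [i [p [iM i_inj pM p_onto]]]].
exact/(Vquo _ _ p)/(Vsub _ _ i).
Qed.

Lemma sg_inhabited (S : finSemigroup) : exists x : S, true.
Proof. by have /card_gt0P [x _] := sg_nonempty S; exists x. Qed.

Lemma divides_factor (A B C : finSemigroup) (h : A -> B) (g : A -> C) :
  sg_hom h -> sg_hom g -> surjective g ->
  (forall a b, h a = h b -> g a = g b) -> divides C B.
Proof.
move=> hM gM g_onto hg.
pose im := [pred b : B | [exists a, h a == b]].
have imM x y : im x -> im y -> im (x \* y).
  move=> /existsP [a /eqP <-] /existsP [b /eqP <-].
  by apply/existsP; exists (a \* b); rewrite hM.
have im_nonempty : exists x, im x.
  by have [a _] := sg_inhabited A; exists (h a); apply/existsP; exists a.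
pose pre (x : sub_sg imM im_nonempty) := xchoose (existsP (valP x)).
have preK x : h (pre x) = val x by apply/eqP/(xchooseP (existsP (valP x))).
exists (sub_sg imM im_nonempty), val, (fun x => g (pre x)); split.
- exact: val_sg_hom.
- exact: val_inj.
- by move=> x y; rewrite -gM; apply: hg; rewrite hM !preK.
- move=> c; have [a <-] := g_onto c.
  have im_ha : im (h a) by apply/existsP; exists a.
  by exists (exist _ (h a) im_ha); apply: hg; rewrite preK.
Qed.

Fixpoint sg_power (P : finSemigroup) (n : nat) : finSemigroup :=
  if n is n'.+1 then prod_sg P (sg_power P n') else trivial_sg.

Lemma pseudovariety_power (V : finSemigroup -> Prop) (P : finSemigroup) (n : nat) :
  pseudovariety V -> V P -> V (sg_power P n).
Proof. by case=> Vtriv Vprod _ _ VP; elim: n => //= n; apply: Vprod. Qed.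

Lemma power_hom (A P : finSemigroup) (X : eqType) (xs : seq X) (F : X -> A -> P) :
  (forall x, x \in xs -> sg_hom (F x)) ->
  exists H : A -> sg_power P (size xs), sg_hom H /\
    forall a b, H a = H b -> forall x, x \in xs -> F x a = F x b.
Proof.
elim: xs => [|x xs IH] FM /=; first by exists (fun _ => tt).
have [H [HM H_sep]] : exists H : A -> sg_power P (size xs), sg_hom H /\
    forall a b, H a = H b -> forall x, x \in xs -> F x a = F x b.
  by apply: IH => y y_xs; apply: FM; rewrite in_cons y_xs orbT.
exists (fun a => (F x a, H a)); split.
  by move=> a b; rewrite /= /prod_op /= HM FM // mem_head.
move=> a b [Fab Hab] y; rewrite in_cons => /orP [/eqP -> // | y_xs].
exact: H_sep.
Qed.

Definition faithful_rz_ideal (P : finSemigroup) (J : {set P}) :=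
  [/\ J != set0, (forall j p, j \in J -> j \* p \in J),
      (forall z, z \in J -> sg_right_zero z) & faithful_right_on J].

Lemma faithful_rz_ideal_trivial : faithful_rz_ideal [set: trivial_sg].
Proof.
by split=> [|j p|[] _ []|[] [] //]; rewrite ?in_setT //; apply/set0Pn; exists tt.
Qed.

Lemma faithful_rz_ideal_prod (P1 P2 : finSemigroup) (J1 : {set P1}) (J2 : {set P2}) :
  faithful_rz_ideal J1 -> faithful_rz_ideal J2 ->
  faithful_rz_ideal (setX J1 J2 : {set prod_sg P1 P2}).
Proof.
move=> [/set0Pn [j1 j1J] J1r J1z J1f] [/set0Pn [j2 j2J] J2r J2z J2f]; split.
- by apply/set0Pn; exists (j1, j2); rewrite in_setX j1J j2J.
- by move=> [a b] [c d]; rewrite !in_setX => /andP [aJ bJ]; rewrite /= J1r // J2r.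
- move=> [a b]; rewrite in_setX => /andP [aJ bJ] [c d].
  by rewrite /= /prod_op /= J1z // J2z.
- move=> [s1 s2] [t1 t2] st; congr pair.
    apply: J1f => j jJ; have := st (j, j2); rewrite in_setX jJ j2J => /(_ isT).
    by case.
  apply: J2f => j jJ; have := st (j1, j); rewrite in_setX jJ j1J => /(_ isT).
  by case.
Qed.

Lemma divides_refl (T : finSemigroup) : divides T T.
Proof. by exists T, id, id; split=> // t; exists t. Qed.

Lemma divides_prod (T1 T2 P1 P2 : finSemigroup) :
  divides T1 P1 -> divides T2 P2 -> divides (prod_sg T1 T2) (prod_sg P1 P2).
Proof.
move=> [U1 [i1 [p1 [i1M i1_inj p1M p1_onto]]]] [U2 [i2 [p2 [i2M i2_inj p2M p2_onto]]]].
exists (prod_sg U1 U2), (fun u => (i1 u.1, i2 u.2)), (fun u => (p1 u.1, p2 u.2)); split.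
- by move=> [a b] [c d]; rewrite /= /prod_op /= i1M i2M.
- by move=> [a b] [c d] [/i1_inj -> /i2_inj ->].
- by move=> [a b] [c d]; rewrite /= /prod_op /= p1M p2M.
- move=> [t1 t2]; have [u1 <-] := p1_onto t1; have [u2 <-] := p2_onto t2.
  by exists (u1, u2).
Qed.

Lemma divides_sub (T' T P : finSemigroup) (f : T' -> T) :
  sg_hom f -> injective f -> divides T P -> divides T' P.
Proof.
move=> fM f_inj [U [i [p [iM i_inj pM p_onto]]]].
pose pre := [pred u : U | [exists t, p u == f t]].
have preM x y : pre x -> pre y -> pre (x \* y).
  move=> /existsP [a /eqP pa] /existsP [b /eqP pb].
  by apply/existsP; exists (a \* b); rewrite pM fM pa pb.
have pre_nonempty : exists x, pre x.
  have [t _] := sg_inhabited T'; have [u pu] := p_onto (f t).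
  by exists u; apply/existsP; exists t; rewrite pu.
pose q (x : sub_sg preM pre_nonempty) := xchoose (existsP (valP x)).
have qP x : f (q x) = p (val x) by apply/esym/eqP/(xchooseP (existsP (valP x))).
exists (sub_sg preM pre_nonempty), (fun x => i (val x)), q; split.
- by move=> x y; rewrite /= iM.
- by move=> x y /i_inj /val_inj.
- by move=> x y; apply: f_inj; rewrite fM !qP /= pM.
- move=> t; have [u pu] := p_onto (f t).
  have pre_u : pre u by apply/existsP; exists t; rewrite pu.
  by exists (exist _ u pre_u); apply: f_inj; rewrite qP.
Qed.

Lemma divides_quo (T T' P : finSemigroup) (f : T -> T') :
  sg_hom f -> surjective f -> divides T P -> divides T' P.
Proof.
move=> fM f_onto [U [i [p [iM i_inj pM p_onto]]]].
exists U, i, (fun u => f (p u)); split=> // [x y | t]; first by rewrite pM fM.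
by have [x <-] := f_onto t; have [u <-] := p_onto x; exists u.
Qed.

Definition frz_divisors (W : finSemigroup -> Prop) (T : finSemigroup) :=
  exists (P : finSemigroup) (J : {set P}), [/\ faithful_rz_ideal J, W P & divides T P].

Lemma frz_divisors_pseudovariety (W : finSemigroup -> Prop) :
  pseudovariety W -> pseudovariety (frz_divisors W).
Proof.
case=> Wtriv Wprod _ _; split.
- exists trivial_sg, [set: trivial_sg].
  by split; [exact: faithful_rz_ideal_trivial | | exact: divides_refl].
- move=> T1 T2 [P1 [J1 [J1frz WP1 T1P1]]] [P2 [J2 [J2frz WP2 T2P2]]].
  exists (prod_sg P1 P2), (setX J1 J2).
  by split; [exact: faithful_rz_ideal_prod | exact: Wprod | exact: divides_prod].
- move=> T T' f fM f_inj [P [J [Jfrz WP TP]]].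
  by exists P, J; split=> //; apply: divides_sub TP.
- move=> T T' f fM f_onto [P [J [Jfrz WP TP]]].
  by exists P, J; split=> //; apply: divides_quo TP.
Qed.

Lemma sum_opA (S : finSemigroup) : associative (@sum_op S).
Proof. by move=> [a|a] [b|b] [c|c] //=; rewrite ?dotinM sg_opA. Qed.

Lemma sum_nonempty (S : finSemigroup) : 0 < #|{: S + dot S}|.
Proof. by rewrite card_sum addn_gt0 sg_nonempty. Qed.

Definition bar_cover (S : finSemigroup) := FinSemigroup (@sum_opA S) (sum_nonempty S).

Lemma bar_pred_gen (S : finSemigroup) (w : S + dot S) : bar_pred (bar_gen w).
Proof. by apply/existsP; exists w. Qed.

Definition bar_of (S : finSemigroup) (w : bar_cover S) : bar S :=
  exist (fun f => bar_pred f) (bar_gen w) (bar_pred_gen w).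

Lemma bar_ofM (S : finSemigroup) : sg_hom (@bar_of S).
Proof. by move=> u v; apply: val_inj; rewrite /= bar_genM. Qed.

Lemma bar_of_onto (S : finSemigroup) : surjective (@bar_of S).
Proof.
move=> [f fP]; case/existsP: (fP) => w /eqP fw.
by exists w; apply: val_inj; rewrite /= fw.
Qed.

Section BarSeparation.
Variables (U P : finSemigroup) (J : {set P}) (i : U -> P).
Hypotheses (Jfrz : faithful_rz_ideal J) (iM : sg_hom i) (i_inj : injective i).

Definition ract (j : P) (a : dot U) : P :=
  if dotout a is Some u then j \* i u else j.

Definition bar_coord (j : P) (w : bar_cover U) : P :=
  match w with inl s => i s | inr a => ract j a end.

Lemma ract_dotin j u : ract j (dotin u) = j \* i u.
Proof. by rewrite /ract dotinK. Qed.

Lemma ractM j a t : ract j (a \* dotin t) = ract j a \* i t.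
Proof.
rewrite /ract; case: (dotP a) => [u -> | _ [a1 _]]; last by rewrite a1 dotinK.
by rewrite -dotinM dotinK iM sg_opA.
Qed.

Lemma ract_in j a : j \in J -> ract j a \in J.
Proof. by case: Jfrz => _ Jr _ _ jJ; rewrite /ract; case: dotout => //= u; apply: Jr. Qed.

Lemma bar_coord_hom j : j \in J -> sg_hom (bar_coord j).
Proof.
by case: Jfrz => _ _ Jz _ jJ [s|a] [t|b] /=; rewrite ?iM ?ractM // Jz // ract_in.
Qed.

Lemma fixing_identity u : (forall j, j \in J -> j \* i u = j) -> sg_identity u.
Proof.
case: Jfrz => _ Jr _ Jf fix_u; split=> x; apply: i_inj; apply: Jf => j jJ.
  by rewrite iM sg_opA fix_u.
by rewrite iM sg_opA fix_u // Jr.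
Qed.

Lemma ract_inj a b : (forall j, j \in J -> ract j a = ract j b) -> a = b.
Proof.
case: Jfrz => _ _ _ Jf; rewrite /ract.
case: (dotP a) => [u -> | notM a1]; case: (dotP b) => [v -> | notM' b1] rab.
- by congr dotin; apply: i_inj; apply: Jf.
- by case/negP: notM'; apply/is_monoidbP; exists u; apply: fixing_identity.
- case/negP: notM; apply/is_monoidbP; exists v.
  by apply: fixing_identity => j jJ; rewrite -rab.
- exact: sg_identity_uniq.
Qed.

Lemma bar_gen_right_zero s a :
  (forall j, j \in J -> i s = ract j a) -> bar_gen (inl s) = bar_gen (inr a).
Proof.
move=> sa; have [/set0Pn [j0 j0J] _ Jz _] := Jfrz.
have sJ : i s \in J by rewrite (sa j0 j0J) ract_in.
have -> : a = dotin s by apply: ract_inj => j jJ; rewrite ract_dotin (Jz _ sJ) (sa j jJ).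
apply/ffunP => x; rewrite !ffunE.
case: (dotP x) => [y -> | _ [x1 _]]; last exact: x1.
by rewrite -dotinM; congr dotin; apply: i_inj; rewrite iM Jz.
Qed.

Lemma bar_gen_separated v w :
  (forall j, j \in J -> bar_coord j v = bar_coord j w) -> bar_gen v = bar_gen w.
Proof.
have [/set0Pn [j0 j0J] _ _ _] := Jfrz.
case: v w => [s|a] [t|b] /= vw.
- by rewrite (i_inj (vw j0 j0J)).
- exact: bar_gen_right_zero.
- by symmetry; apply: bar_gen_right_zero => j jJ; rewrite vw.
- by rewrite (ract_inj vw).
Qed.

End BarSeparation.

Section BarQuotient.
Variables (U T : finSemigroup) (p : U -> T) (e : dot T).
Hypotheses (pM : sg_hom p) (p_onto : surjective p) (e1 : sg_identity e).

Definition dot_map (a : dot U) : dot T :=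
  if dotout a is Some u then dotin (p u) else e.

Lemma dot_map_dotin u : dot_map (dotin u) = dotin (p u).
Proof. by rewrite /dot_map dotinK. Qed.

Lemma dot_mapM a t : dot_map (a \* dotin t) = dot_map a \* dotin (p t).
Proof.
rewrite /dot_map; case: (dotP a) => [u -> | _ [a1 _]].
  by rewrite -dotinM dotinK pM dotinM.
by rewrite a1 dotinK; case: e1.
Qed.

Lemma dot_map_onto : surjective dot_map.
Proof.
move=> y; case: (dotP y) => [t -> | notM y1].
  by have [u <-] := p_onto t; exists (dotin u); apply: dot_map_dotin.
have [eU eU1] := dot_identity U; exists eU; rewrite /dot_map.
case: (dotP eU) => [u eUu | _ _]; last exact: sg_identity_uniq.
case/negP: notM; apply/is_monoidbP; exists (p u).
have [lu ru] : sg_identity u.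
  rewrite eUu in eU1; case: eU1 => l r.
  by split=> x; apply: dotin_inj; rewrite dotinM ?l ?r.
by split=> t; have [x <-] := p_onto t; rewrite -pM ?lu ?ru.
Qed.

Definition cover_map (w : bar_cover U) : bar_cover T :=
  match w with inl s => inl (p s) | inr a => inr (dot_map a) end.

Definition bar_map (w : bar_cover U) : bar T := bar_of (cover_map w).

Lemma bar_map_hom : sg_hom bar_map.
Proof.
move=> v w; rewrite /bar_map -bar_ofM.
by case: v w => [s|a] [t|b] //=; rewrite ?pM ?dot_mapM.
Qed.

Lemma bar_gen_cover_map w x : bar_gen (cover_map w) (dot_map x) = dot_map (bar_gen w x).
Proof. by case: w => [s|a]; rewrite !ffunE //= dot_mapM. Qed.

Lemma bar_map_eq v w : bar_gen v = bar_gen w -> bar_map v = bar_map w.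
Proof.
move=> vw; apply: val_inj; apply/ffunP => y /=; have [x <-] := dot_map_onto y.
by rewrite !bar_gen_cover_map vw.
Qed.

Lemma bar_map_onto : surjective bar_map.
Proof.
move=> f; have [[t|y] <-] := bar_of_onto f.
  by have [s <-] := p_onto t; exists (inl s).
by have [a <-] := dot_map_onto y; exists (inr a).
Qed.

End BarQuotient.

Lemma bar_divides_power (T P : finSemigroup) (J : {set P}) :
  faithful_rz_ideal J -> divides T P -> divides (bar T) (sg_power P #|J|).
Proof.
move=> Jfrz [U [i [p [iM i_inj pM p_onto]]]]; have [e e1] := dot_identity T.
have coordM j : j \in enum J -> sg_hom (bar_coord i j).
  by rewrite mem_enum; apply: bar_coord_hom.
have [H [HM H_sep]] := power_hom coordM; rewrite cardE.
apply: divides_factor HM (bar_map_hom pM e1) _ _.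
- exact: (bar_map_onto pM p_onto e1).
- move=> v w Hvw; apply: (bar_map_eq pM p_onto e1).
  by apply: (bar_gen_separated Jfrz iM i_inj) => j jJ; apply: H_sep; rewrite ?mem_enum.
Qed.

Lemma bar_of_inl_hom (S : finSemigroup) : sg_hom (fun s : S => bar_of (inl s)).
Proof. by move=> s t; rewrite -bar_ofM. Qed.

Lemma bar_of_inl_inj (S : finSemigroup) : injective (fun s : S => bar_of (inl s)).
Proof.
move=> s t /(congr1 (fun f : bar S => val f)) /ffunP st.
have [e [e1 _]] := dot_identity S.
by apply: dotin_inj; have := st e; rewrite !ffunE /= !e1.
Qed.

Theorem corollary2p6 (S : finSemigroup) (J : {set S}) :
  minimal_ideal J ->
  (forall z, z \in J -> sg_right_zero z) ->
  faithful_right_on J ->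
  forall T : finSemigroup,
    barV (generated (fun U => U = S)) T <-> generated (fun U => U = S) T.
Proof.
move=> [[J_nonempty J_ideal] _] Jz Jf T.
have pvS := generated_pseudovariety (fun U => U = S).
have Jfrz : faithful_rz_ideal J.
  by split=> // j s jJ; case: (J_ideal s j jJ).
split=> [barT | ST V pvV barV_sub].
- apply: barT => // _ [T' [ST' ->]].
  have [P [J' [J'frz SP T'P]]] : frz_divisors (generated (fun U => U = S)) T'.
    apply: ST' => [|_ ->]; first exact: frz_divisors_pseudovariety.
    by exists S, J; split=> //; [exact: generated_sub | exact: divides_refl].
  apply: pseudovariety_divides pvS (pseudovariety_power _ pvS SP) _.
  exact: bar_divides_power J'frz T'P.
- apply: ST => // _ ->; case: (pvV) => _ _ Vsub _.
  apply: (Vsub _ _ _ (@bar_of_inl_hom S) (@bar_of_inl_inj S)).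
  by apply: barV_sub; exists S; split=> //; apply: generated_sub.
Qed.
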